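(* Let $\mathbb{F}$ be an infinite field with $\operatorname{char}(\mathbb{F})\neq 2$, let $G$ be a group with a group involution $\ast$ and a non-trivial orientation $\sigma$ such that $gg^\ast\in N=\ker\sigma$ for all $g\in G$, and let $\circledast$ be the associated oriented involution of $\mathbb{F}G$. If $\mathbb{F}G$ is normal with respect to $\circledast$, then $N^+\subseteq\zeta(G)$.
   Context: A group involution on $G$ is a map $\ast:G\to G$ with $(gh)^\ast=h^\ast g^\ast$ and $(g^\ast)^\ast=g$. An orientation is a group homomorphism $\sigma:G\to\{\pm1\}$. The oriented involution is $(\sum_g\alpha_g g)^\circledast=\sum_g\alpha_g\sigma(g)g^\ast$ on $\mathbb{F}G$. $\mathbb{F}G$ is normal if $\alpha\alpha^\circledast=\alpha^\circledast\alpha$ for all $\alpha\in\mathbb{F}G$. $N^+$ denotes the set of elements $g\in G$ with $g^\circledast=g$, i.e. $N^+=\{n\in N: n^\ast=n\}$. $\zeta(G)$ is the center of $G$. *)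

From HB Require Import structures.
From mathcomp Require Import all_boot all_order all_algebra.
Set Implicit Arguments. Unset Strict Implicit. Unset Printing Implicit Defensive.
Import Order.TTheory GRing.Theory Num.Theory.
Local Open Scope ring_scope.

Definition group_axioms (G : Type) (mul : G -> G -> G) (one : G) (inv : G -> G)
  : Prop :=
  (forall x y z, mul x (mul y z) = mul (mul x y) z) /\
  (forall x, mul one x = x) /\
  (forall x, mul x one = x) /\
  (forall x, mul (inv x) x = one) /\
  (forall x, mul x (inv x) = one).

Definition group_involution (G : Type) (mul : G -> G -> G) (star : G -> G)
  : Prop :=
  (forall g h, star (mul g h) = mul (star h) (star g)) /\
  (forall g, star (star g) = g).

Definition orientation (G : Type) (mul : G -> G -> G) (sigma : G -> int)
  : Prop :=
  (forall g, sigma g = 1 \/ sigma g = -1) /\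
  (forall g h, sigma (mul g h) = sigma g * sigma h).

(* Elements of the group algebra F G are represented as finite formal sums
   sum_i a_i g_i, i.e. lists of pairs (a_i, g_i).  Every element of F G has
   such a representation; two lists represent the same element iff their
   coefficient functions agree. *)
Definition gr_coef (F : fieldType) (G : eqType) (s : seq (F * G)) (g : G) : F :=
  \sum_(p <- s | p.2 == g) p.1.

Definition gr_mul (F : fieldType) (G : eqType) (mul : G -> G -> G)
  (s t : seq (F * G)) : seq (F * G) :=
  [seq (p.1 * q.1, mul p.2 q.2) | p <- s, q <- t].

Definition gr_oinv (F : fieldType) (G : eqType) (star : G -> G)
  (sigma : G -> int) (s : seq (F * G)) : seq (F * G) :=
  [seq (p.1 * (sigma p.2)%:~R, star p.2) | p <- s].

Definition gr_normal (F : fieldType) (G : eqType) (mul : G -> G -> G)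
  (star : G -> G) (sigma : G -> int) : Prop :=
  forall s : seq (F * G),
    gr_coef (gr_mul mul s (gr_oinv star sigma s)) =1
    gr_coef (gr_mul mul (gr_oinv star sigma s) s).

From mathcomp Require Import all_boot all_order all_algebra.
From mathcomp Require Import ring.
Import GRing.Theory Num.Theory.
Set Implicit Arguments.
Unset Strict Implicit.
Unset Printing Implicit Defensive.
Local Open Scope ring_scope.

(* Test normality on alpha = x + b n with n in N^+ and b = 1, -1: subtracting
   the two identities kills the terms of even degree in b, and since
   char F <> 2 the coefficient of x n then shows that x commutes with n, or
   x^* n = x n (when sigma x = 1), or n x^* = x n (when sigma x = -1).
   Applying this to x = g and to x = g n and cancelling in G yields n g = g n. *)

Lemma group_mulIg (G : Type) (mul : G -> G -> G) (one : G) (inv : G -> G) :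
  group_axioms mul one inv -> left_injective mul.
Proof.
move=> [mulA [_ [mulg1 [_ mulgV]]]] c a b eq_ab.
by rewrite -(mulg1 a) -(mulg1 b) -(mulgV c) !mulA eq_ab.
Qed.

Lemma gr_coef_nil (F : fieldType) (G : eqType) (g : G) :
  gr_coef ([::] : seq (F * G)) g = 0.
Proof. by rewrite /gr_coef big_nil. Qed.

Lemma gr_coef_cons (F : fieldType) (G : eqType) (p : F * G) s g :
  gr_coef (p :: s) g = (p.2 == g)%:R * p.1 + gr_coef s g.
Proof. by rewrite /gr_coef big_cons; case: eqP; rewrite ?mul1r ?mul0r ?add0r. Qed.

Lemma eq_odd_part (R : comPzRingType) (a0 a1 a2 b0 b1 b2 : R) :
  (forall e : R, e = 1 \/ e = -1 ->
     a0 + e * a1 + e ^+ 2 * a2 = b0 + e * b1 + e ^+ 2 * b2) ->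
  2 * a1 = 2 * b1.
Proof.
move=> eq_pm; have eq_plus := eq_pm 1 (or_introl erefl).
have eq_minus := eq_pm (-1) (or_intror erefl).
apply/eqP; rewrite -subr_eq0.
have -> : 2 * a1 - 2 * b1 =
  (a0 + 1 * a1 + 1 ^+ 2 * a2 - (b0 + 1 * b1 + 1 ^+ 2 * b2))
  - (a0 + (-1) * a1 + (-1) ^+ 2 * a2 - (b0 + (-1) * b1 + (-1) ^+ 2 * b2)).
  by ring.
by rewrite eq_plus eq_minus !subrr.
Qed.

Lemma natr2_neq0 (F : fieldType) : ~~ (2%N \in [pchar F]) -> 2 != 0 :> F.
Proof. by rewrite inE /=. Qed.

Lemma orb_of_add1_eq (F : fieldType) (a b c : bool) : 2 != 0 :> F ->
  1 + a%:R = b%:R + c%:R :> F -> b || c.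
Proof.
by move=> two_neq0; case: a b c => [] [] [] //= /eqP;
  rewrite ?addr0 ?oner_eq0 // (negbTE two_neq0).
Qed.

Lemma orb_of_sub1_eq (F : fieldType) (a b c : bool) : 2 != 0 :> F ->
  1 - a%:R = - b%:R + c%:R :> F -> c || a.
Proof.
by move=> two_neq0; case: a b c => [] [] [] //= /eqP;
  rewrite ?subr0 ?addr0 ?oppr0 ?oner_eq0 // -subr_eq0 opprK (negbTE two_neq0).
Qed.

Section NormalGroupAlgebra.

Variables (F : fieldType) (G : eqType).
Variables (mul : G -> G -> G) (star : G -> G) (sigma : G -> int).
Hypothesis normalFG : gr_normal F mul star sigma.
Hypothesis two_neq0 : 2 != 0 :> F.
Variable n : G.
Hypotheses (sigma_n : sigma n = 1) (star_n : star n = n).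

Local Notation delta p h := ((h == p)%:R : F).
Local Notation sgn x := ((sigma x)%:~R : F).

Lemma gr_normal_binomial (x p : G) (b : F) :
  sgn x * delta p (mul x (star x))
    + b * (delta p (mul x n) + sgn x * delta p (mul n (star x)))
    + b ^+ 2 * delta p (mul n n)
  = sgn x * delta p (mul (star x) x)
    + b * (sgn x * delta p (mul (star x) n) + delta p (mul n x))
    + b ^+ 2 * delta p (mul n n).
Proof.
pose alpha := [:: (1, x); (b, n)].
(* [ring] ignores hypotheses, so write 0 as the difference of the two sides of
   normality at alpha and expand both sides. *)
apply/eqP; rewrite -subr_eq0; apply/eqP.
rewrite -(subrr (gr_coef (gr_mul mul (gr_oinv star sigma alpha) alpha) p)).
rewrite -{1}normalFG /gr_mul /gr_oinv /= !gr_coef_cons gr_coef_nil sigma_n star_n.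
by rewrite /=; ring.
Qed.

Lemma gr_normal_coef_mul (x : G) :
  1 + sgn x * delta (mul x n) (mul n (star x))
  = sgn x * delta (mul x n) (mul (star x) n) + delta (mul x n) (mul n x).
Proof.
have := eq_odd_part (fun e _ => gr_normal_binomial x (mul x n) e).
by rewrite eqxx => /(mulfI two_neq0).
Qed.

Lemma commute_or_star_mull (x : G) : sigma x = 1 ->
  mul x n = mul n x \/ mul (star x) n = mul x n.
Proof.
move=> sigma_x; have := gr_normal_coef_mul x; rewrite sigma_x !mul1r.
by case/(orb_of_add1_eq two_neq0)/orP => /eqP; [right | left].
Qed.

Lemma commute_or_star_mulr (x : G) : sigma x = -1 ->
  mul x n = mul n x \/ mul n (star x) = mul x n.
Proof.
move=> sigma_x; have := gr_normal_coef_mul x; rewrite sigma_x !mulN1r.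
by case/(orb_of_sub1_eq two_neq0)/orP => /eqP; [left | right].
Qed.

Hypotheses (mulA : associative mul) (mulIg : left_injective mul).
Hypothesis star_mul : {morph star : g h / mul g h >-> mul h g}.
Hypothesis sigma_mul : {morph sigma : g h / mul g h >-> g * h}.

Lemma commute_of_sigma_eq1 (g : G) : sigma g = 1 -> mul n g = mul g n.
Proof.
move=> sigma_g; case: (commute_or_star_mull sigma_g) => [-> // | /mulIg star_g].
have sigma_gn : sigma (mul g n) = 1 by rewrite sigma_mul sigma_g sigma_n.
case: (commute_or_star_mull sigma_gn) => [gn_n | ].
  by apply: (@mulIg n); rewrite -mulA -gn_n.
by rewrite star_mul star_n star_g => /mulIg.
Qed.

Lemma commute_of_sigma_eqN1 (g : G) : sigma g = -1 -> mul n g = mul g n.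
Proof.
move=> sigma_g; case: (commute_or_star_mulr sigma_g) => [-> // | n_star_g].
have sigma_gn : sigma (mul g n) = -1 by rewrite sigma_mul sigma_g sigma_n.
case: (commute_or_star_mulr sigma_gn) => [gn_n | ].
  by apply: (@mulIg n); rewrite -mulA -gn_n.
by rewrite star_mul star_n n_star_g mulA => /mulIg.
Qed.

End NormalGroupAlgebra.

Theorem lemma8 (F : fieldType) (G : eqType)
  (mul : G -> G -> G) (one : G) (inv : G -> G) (star : G -> G) (sigma : G -> int) :
  (forall s : seq F, exists x : F, x \notin s) ->
  ~~ (2%N \in [pchar F]) ->
  group_axioms mul one inv ->
  group_involution mul star ->
  orientation mul sigma ->
  (exists g, sigma g = -1) ->
  (forall g, sigma (mul g (star g)) = 1) ->
  gr_normal F mul star sigma ->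
  forall n : G, sigma n = 1 -> star n = n ->
  forall g : G, mul n g = mul g n.
Proof.
move=> _ /natr2_neq0 two_neq0 groupG [star_mul _] [sigma_pm sigma_mul] _ _.
move=> normalFG n sigma_n star_n g.
have mulA : associative mul by case: groupG.
have mulIg := group_mulIg groupG.
case: (sigma_pm g) => sigma_g.
  exact: (commute_of_sigma_eq1 normalFG two_neq0 sigma_n star_n mulA mulIg
            star_mul sigma_mul sigma_g).
exact: (commute_of_sigma_eqN1 normalFG two_neq0 sigma_n star_n mulA mulIg
          star_mul sigma_mul sigma_g).
Qed.
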